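(* Fix $D,\alpha,\theta>0$. There is a constant $c=c(D,\alpha,\theta)>0$ such that for every finite connected graph $G$ on $n$ vertices satisfying (bal), (mix), (esc) with parameters $D,\alpha,\theta$, with $n$ sufficiently large, the following holds. Let $u$ be a $\pi$-distributed vertex and, given $u$, let $X,Y$ be two independent lazy random walks started at $u$. Then $$\Pr\left(X[0,r]\cap Y[1,r]=\varnothing\right)\ge c.$$
   Context: For a finite connected graph $G=(V,E)$ with $n$ vertices, $d(v)$ is the degree of $v$, $\delta(G),\Delta(G)$ are the minimum and maximum degrees. The lazy random walk $(X_t)$ on $G$ at each step stays put with probability $1/2$ and otherwise moves along a uniformly chosen edge incident to the current vertex. Write $\mathbf p^t(u,v)=\Pr_u(X_t=v)$ and $\pi(v)=d(v)/(2|E|)$. The uniform mixing time is $t_{\mathrm{mix}}(G)=\min\{t\ge0:\max_{u,v\in V}|\mathbf p^t(u,v)/\pi(v)-1|\le 1/2\}$, and the bubble sum is $\mathcal B(G)=\sum_{t=0}^{t_{\mathrm{mix}}(G)}(t+1)\sup_{v}\mathbf p^t(v,v)$. Assumptions with parameters $D,\alpha,\theta>0$: (bal) $\Delta(G)/\delta(G)\le D$; (mix) $t_{\mathrm{mix}}(G)\le n^{1/2-\alpha}$; (esc) $\mathcal B(G)\le\theta$. The run time is $r=n^{1/2-\alpha/3}$ (rounded to an integer). For a walk $X$ and integers $a\le b$, $X[a,b]$ denotes the set $\{X_i: a\le i\le b\}$. *)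

From Stdlib Require Import Reals Lra Lia Arith List Relations.
Open Scope R_scope.

Definition rsum (n : nat) (f : nat -> R) : R :=
  fold_right (fun v acc => f v + acc) 0 (seq 0 n).

(* maximum over v = 0 .. n-1 of nonnegative quantities (0 if n = 0) *)
Definition rmax (n : nat) (f : nat -> R) : R :=
  fold_right (fun v acc => Rmax (f v) acc) 0 (seq 0 n).

Definition simple_graph (n : nat) (adj : nat -> nat -> bool) : Prop :=
  (forall u v, adj u v = adj v u) /\ (forall u, adj u u = false).

Definition connected (n : nat) (adj : nat -> nat -> bool) : Prop :=
  (0 < n)%nat /\
  forall u v, (u < n)%nat -> (v < n)%nat ->
    clos_refl_trans nat (fun a b => (a < n)%nat /\ (b < n)%nat /\ adj a b = true) u v.

Definition deg (n : nat) (adj : nat -> nat -> bool) (v : nat) : nat :=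
  length (filter (fun w => adj v w) (seq 0 n)).

Definition twoE (n : nat) (adj : nat -> nat -> bool) : R :=
  rsum n (fun v => INR (deg n adj v)).

Definition pi_ (n : nat) (adj : nat -> nat -> bool) (v : nat) : R :=
  INR (deg n adj v) / twoE n adj.

Definition P1 (n : nat) (adj : nat -> nat -> bool) (v w : nat) : R :=
  (if Nat.eqb v w then / 2 else 0) +
  (if adj v w then / (2 * INR (deg n adj v)) else 0).

Fixpoint pt (n : nat) (adj : nat -> nat -> bool) (t : nat) (u v : nat) : R :=
  match t with
  | O => if Nat.eqb u v then 1 else 0
  | S t' => rsum n (fun w => pt n adj t' u w * P1 n adj w v)
  end.

Definition mixed (n : nat) (adj : nat -> nat -> bool) (t : nat) : Prop :=
  forall u v, (u < n)%nat -> (v < n)%nat ->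
    Rabs (pt n adj t u v / pi_ n adj v - 1) <= / 2.

Definition is_tmix (n : nat) (adj : nat -> nat -> bool) (T : nat) : Prop :=
  mixed n adj T /\ forall t, (t < T)%nat -> ~ mixed n adj t.

Definition bubble (n : nat) (adj : nat -> nat -> bool) (T : nat) : R :=
  rsum (S T) (fun t => INR (S t) * rmax n (fun v => pt n adj t v v)).

Fixpoint sumseq (n : nat) (k : nat) (f : list nat -> R) : R :=
  match k with
  | O => f nil
  | S k' => rsum n (fun v => sumseq n k' (fun s => f (v :: s)))
  end.

Fixpoint wt (n : nat) (adj : nat -> nat -> bool) (u : nat) (xs : list nat) : R :=
  match xs with
  | nil => 1
  | x :: xs' => P1 n adj u x * wt n adj x xs'
  end.

Definition disjointb (a b : list nat) : bool :=
  forallb (fun x => negb (existsb (Nat.eqb x) b)) a.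

(* Pr( X[0,r] ∩ Y[1,r] = ∅ ), u ~ pi, X, Y independent lazy walks from u *)
Definition nonint_prob (n : nat) (adj : nat -> nat -> bool) (r : nat) : R :=
  rsum n (fun u => pi_ n adj u *
    sumseq n r (fun xs => sumseq n r (fun ys =>
      wt n adj u xs * wt n adj u ys *
      (if disjointb (u :: xs) ys then 1 else 0)))).

Definition run_time (n : nat) (alpha : R) : nat :=
  Z.to_nat (Int_part (Rpower (INR n) (/ 2 - alpha / 3))).

From Stdlib Require Import Reals Lra Lia Arith List Relations ZArith.
Open Scope R_scope.

(* Last-exit decomposition.  Run two walks X, Y from a pi-distributed vertex for
   L = r + T steps, and look at the last time J at which Y visits X, say
   Y_J = X_I.  Such a J exists since Y_0 = X_0, and after J the walk Y avoids X.
   If I + J <= T, then from the meeting point w = X_I the two walks continue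
   for r steps without intersecting, so by reversibility this case has
   probability at most sum_{t <= T} (t + 1) sup_v p^t(v,v) * Pr(non-intersection)
   = B(G) * Pr(non-intersection).  If I + J > T, the chain has mixed, and
   each of the (L + 1)^2 pairs (I, J) contributes at most (3/2) max pi <= (3/2) D/n.
   Hence 1 <= theta * Pr(non-intersection) + (2r + 1)^2 (3/2) D/n, and the
   last term is at most 1/2 for large n because r = n^(1/2 - alpha/3). *)

Definition lsum (l : list nat) (f : nat -> R) : R :=
  fold_right (fun v acc => f v + acc) 0 l.

Lemma lsum_ext l f g : (forall v, In v l -> f v = g v) -> lsum l f = lsum l g.
Proof.
  induction l as [|a l IH]; simpl; intros H; [reflexivity|].
  rewrite H, IH; auto.
Qed.

Lemma lsum_le l f g : (forall v, In v l -> f v <= g v) -> lsum l f <= lsum l g.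
Proof.
  induction l as [|a l IH]; simpl; intros H; [lra|].
  apply Rplus_le_compat; auto.
Qed.

Lemma lsum_add l f g : lsum l (fun v => f v + g v) = lsum l f + lsum l g.
Proof. induction l; simpl; [lra|]. rewrite IHl; lra. Qed.

Lemma lsum_scal l c f : lsum l (fun v => c * f v) = c * lsum l f.
Proof. induction l; simpl; [lra|]. rewrite IHl; lra. Qed.

Lemma lsum_const l c : lsum l (fun _ => c) = INR (length l) * c.
Proof. induction l; simpl length; simpl lsum; [simpl; lra|]. rewrite IHl, S_INR; lra. Qed.

Lemma lsum_swap l1 l2 (f : nat -> nat -> R) :
  lsum l1 (fun i => lsum l2 (f i)) = lsum l2 (fun j => lsum l1 (fun i => f i j)).
Proof.
  induction l1; simpl.
  - rewrite lsum_const; lra.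
  - rewrite IHl1, <- lsum_add. reflexivity.
Qed.

Lemma lsum_nonneg l f : (forall v, In v l -> 0 <= f v) -> 0 <= lsum l f.
Proof.
  intros H. replace 0 with (lsum l (fun _ => 0)).
  - apply lsum_le; auto.
  - rewrite lsum_const; lra.
Qed.

Lemma lsum_term_le l f k : (forall v, In v l -> 0 <= f v) -> In k l -> f k <= lsum l f.
Proof.
  induction l as [|a l IH]; simpl; intros H Hk; [contradiction|].
  pose proof (lsum_nonneg l f (fun v Hv => H v (or_intror Hv))).
  pose proof (H a (or_introl eq_refl)).
  destruct Hk as [<-|Hk]; [lra|].
  pose proof (IH (fun v Hv => H v (or_intror Hv)) Hk); lra.
Qed.

Lemma lsum_eqb l v c : NoDup l -> In v l -> lsum l (fun w => if Nat.eqb v w then c else 0) = c.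
Proof.
  induction l as [|a l IH]; simpl; intros Hnd Hv; [contradiction|].
  inversion Hnd as [|? ? Ha Hl]; subst.
  destruct (Nat.eqb_spec v a) as [<-|Hva].
  - rewrite (lsum_ext l _ (fun _ => 0 * 1)), lsum_scal; [lra|].
    intros w Hw. destruct (Nat.eqb_spec v w); [subst; contradiction | lra].
  - destruct Hv as [->|Hv]; [contradiction|]. rewrite IH; auto; lra.
Qed.

Lemma In_seq0 n v : In v (seq 0 n) <-> (v < n)%nat.
Proof. rewrite in_seq; lia. Qed.

Lemma rsum_ext n f g : (forall v, (v < n)%nat -> f v = g v) -> rsum n f = rsum n g.
Proof. intros H; apply lsum_ext; intros v Hv; apply H, In_seq0, Hv. Qed.

Lemma rsum_le n f g : (forall v, (v < n)%nat -> f v <= g v) -> rsum n f <= rsum n g.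
Proof. intros H; apply lsum_le; intros v Hv; apply H, In_seq0, Hv. Qed.

Lemma rsum_add n f g : rsum n (fun v => f v + g v) = rsum n f + rsum n g.
Proof. apply lsum_add. Qed.

Lemma rsum_scal n c f : rsum n (fun v => c * f v) = c * rsum n f.
Proof. apply lsum_scal. Qed.

Lemma rsum_const n c : rsum n (fun _ => c) = INR n * c.
Proof. unfold rsum; fold (lsum (seq 0 n) (fun _ => c)). rewrite lsum_const, length_seq; auto. Qed.

Lemma rsum_0 n : rsum n (fun _ => 0) = 0.
Proof. rewrite rsum_const; lra. Qed.

Lemma rsum_swap n m (f : nat -> nat -> R) :
  rsum n (fun i => rsum m (f i)) = rsum m (fun j => rsum n (fun i => f i j)).
Proof. apply lsum_swap. Qed.

Lemma rsum_nonneg n f : (forall v, (v < n)%nat -> 0 <= f v) -> 0 <= rsum n f.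
Proof. intros H; apply lsum_nonneg; intros v Hv; apply H, In_seq0, Hv. Qed.

Lemma rsum_term_le n f k : (forall v, (v < n)%nat -> 0 <= f v) -> (k < n)%nat -> f k <= rsum n f.
Proof.
  intros H Hk; apply lsum_term_le; [intros v Hv; apply H, In_seq0, Hv | apply In_seq0, Hk].
Qed.

Lemma rsum_eqb n v c : (v < n)%nat -> rsum n (fun w => if Nat.eqb v w then c else 0) = c.
Proof. intros Hv; apply lsum_eqb; [apply seq_NoDup | apply In_seq0, Hv]. Qed.

Lemma le_rmax n f v : (v < n)%nat -> f v <= rmax n f.
Proof.
  intros Hv. apply In_seq0 in Hv. unfold rmax.
  induction (seq 0 n) as [|a l IH]; simpl in *; [contradiction|].
  destruct Hv as [<-|Hv]; [apply Rmax_l | eapply Rle_trans; [apply IH, Hv | apply Rmax_r]].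
Qed.

Lemma sumseq_ext n k f g : (forall l, length l = k -> f l = g l) -> sumseq n k f = sumseq n k g.
Proof.
  revert f g; induction k; simpl; intros f g H; [auto|].
  apply rsum_ext; intros; apply IHk; intros; apply H; simpl; auto.
Qed.

Lemma sumseq_le n k f g : (forall l, length l = k -> f l <= g l) -> sumseq n k f <= sumseq n k g.
Proof.
  revert f g; induction k; simpl; intros f g H; [apply H; auto|].
  apply rsum_le; intros; apply IHk; intros; apply H; simpl; auto.
Qed.

Lemma sumseq_add n k f g : sumseq n k (fun s => f s + g s) = sumseq n k f + sumseq n k g.
Proof.
  revert f g; induction k; simpl; intros; [auto|].
  rewrite <- rsum_add. apply rsum_ext; intros; apply IHk.
Qed.

Lemma sumseq_scal n k c f : sumseq n k (fun s => c * f s) = c * sumseq n k f.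
Proof.
  revert f; induction k; simpl; intros; [auto|].
  rewrite <- rsum_scal. apply rsum_ext; intros; apply IHk.
Qed.

Lemma sumseq_0 n k : sumseq n k (fun _ => 0) = 0.
Proof. induction k; simpl; [reflexivity|]. rewrite (rsum_ext n _ (fun _ => 0)); auto using rsum_0. Qed.

Lemma sumseq_nonneg n k f : (forall l, length l = k -> 0 <= f l) -> 0 <= sumseq n k f.
Proof. intros H. rewrite <- (sumseq_0 n k). apply sumseq_le, H. Qed.

Lemma sumseq_rsum n k m (f : nat -> list nat -> R) :
  sumseq n k (fun s => rsum m (fun i => f i s)) = rsum m (fun i => sumseq n k (f i)).
Proof.
  revert f; induction k; simpl; intros; [auto|].
  rewrite (rsum_ext n _ (fun v => rsum m (fun i => sumseq n k (fun s => f i (v :: s))))).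
  - apply rsum_swap.
  - intros; apply IHk.
Qed.

Lemma sumseq_app n a b f :
  sumseq n (a + b) f = sumseq n a (fun s => sumseq n b (fun t => f (s ++ t))).
Proof. revert f; induction a; simpl; intros; [auto|]. apply rsum_ext; intros; apply IHa. Qed.

Lemma Rinv_nonneg x : 0 <= x -> 0 <= / x.
Proof.
  intros H. destruct (Req_dec x 0) as [->|]; [rewrite Rinv_0; lra|].
  left; apply Rinv_0_lt_compat; lra.
Qed.

Fixpoint walk_end (u : nat) (s : list nat) : nat :=
  match s with nil => u | v :: s' => walk_end v s' end.

Lemma nth_walk_end u s t : nth (length s) (u :: s ++ t) 0%nat = walk_end u s.
Proof. revert u; induction s; intros; [reflexivity | apply IHs]. Qed.

Lemma skipn_walk_end (u : nat) s t : skipn (S (length s)) (u :: s ++ t) = t.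
Proof. simpl. induction s; simpl; auto. Qed.

Section LazyWalk.
Variable n : nat.
Variable adj : nat -> nat -> bool.

Lemma P1_nonneg v w : 0 <= P1 n adj v w.
Proof.
  unfold P1. pose proof (Rinv_nonneg (2 * INR (deg n adj v))).
  pose proof (pos_INR (deg n adj v)).
  destruct (Nat.eqb v w), (adj v w); lra.
Qed.

Lemma pt_nonneg t u v : 0 <= pt n adj t u v.
Proof.
  revert v; induction t; simpl; intros; [destruct (Nat.eqb u v); lra|].
  apply rsum_nonneg; intros. apply Rmult_le_pos; auto using P1_nonneg.
Qed.

Lemma wt_nonneg u xs : 0 <= wt n adj u xs.
Proof. revert u; induction xs; simpl; intros; [lra | apply Rmult_le_pos; auto using P1_nonneg]. Qed.

Lemma wt_app u s t : wt n adj u (s ++ t) = wt n adj u s * wt n adj (walk_end u s) t.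
Proof. revert u; induction s; simpl; intros; [lra | rewrite IHs; lra]. Qed.

Lemma pi_nonneg v : 0 <= pi_ n adj v.
Proof.
  apply Rmult_le_pos; [apply pos_INR|]. apply Rinv_nonneg, rsum_nonneg; intros; apply pos_INR.
Qed.

Lemma pt_add a b u v : (v < n)%nat ->
  pt n adj (a + b) u v = rsum n (fun w => pt n adj a u w * pt n adj b w v).
Proof.
  revert v; induction b; intros v Hv.
  - rewrite Nat.add_0_r. simpl.
    rewrite (rsum_ext n _ (fun w => if Nat.eqb v w then pt n adj a u v else 0)).
    + rewrite rsum_eqb; auto.
    + intros w _. destruct (Nat.eqb_spec w v), (Nat.eqb_spec v w); subst; try lra; congruence.
  - rewrite Nat.add_succ_r. simpl.
    rewrite (rsum_ext n _ (fun y => rsum n (fun w => pt n adj a u w * pt n adj b w y * P1 n adj y v))).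
    + rewrite rsum_swap. apply rsum_ext; intros w _. rewrite <- rsum_scal.
      apply rsum_ext; intros; lra.
    + intros y Hy. rewrite IHb, Rmult_comm, <- rsum_scal by auto. apply rsum_ext; intros; lra.
Qed.

Lemma pt_S_l t u v : (u < n)%nat -> (v < n)%nat ->
  pt n adj (S t) u v = rsum n (fun w => P1 n adj u w * pt n adj t w v).
Proof.
  intros Hu Hv. change (S t) with (1 + t)%nat. rewrite pt_add by auto.
  apply rsum_ext; intros w Hw. f_equal. simpl.
  rewrite (rsum_ext n _ (fun y => if Nat.eqb u y then P1 n adj u w else 0)).
  - apply rsum_eqb; auto.
  - intros y _. destruct (Nat.eqb_spec u y); subst; lra.
Qed.

Lemma deg_rsum v : rsum n (fun w => if adj v w then 1 else 0) = INR (deg n adj v).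
Proof.
  unfold deg, rsum. induction (seq 0 n); simpl; [auto|].
  destruct (adj v a); simpl length; rewrite IHl; try rewrite S_INR; lra.
Qed.

Hypothesis deg_pos : forall v, (v < n)%nat -> (0 < deg n adj v)%nat.

Lemma P1_row_sum v : (v < n)%nat -> rsum n (P1 n adj v) = 1.
Proof.
  intros Hv. unfold P1. rewrite rsum_add.
  rewrite (rsum_ext n (fun w => if adj v w then _ else 0)
             (fun w => / (2 * INR (deg n adj v)) * (if adj v w then 1 else 0))).
  - rewrite rsum_scal, deg_rsum, rsum_eqb by auto.
    assert (0 < INR (deg n adj v)) by (apply lt_0_INR; auto). field; lra.
  - intros; destruct (adj v _); lra.
Qed.

Lemma pt_row_sum s w : (w < n)%nat -> rsum n (pt n adj s w) = 1.
Proof.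
  intros Hw. induction s; simpl; [apply rsum_eqb; auto|].
  rewrite rsum_swap, <- IHs. apply rsum_ext; intros y Hy.
  rewrite rsum_scal, P1_row_sum by auto. lra.
Qed.

Lemma wt_total k u : (u < n)%nat -> sumseq n k (wt n adj u) = 1.
Proof.
  revert u; induction k; simpl; intros u Hu; [auto|].
  rewrite (rsum_ext n _ (P1 n adj u)); [apply P1_row_sum; auto|].
  intros v Hv. rewrite sumseq_scal, IHk; auto; lra.
Qed.

Lemma sumseq_wt_walk_end i u (g : nat -> R) : (u < n)%nat ->
  sumseq n i (fun s => wt n adj u s * g (walk_end u s)) = rsum n (fun w => pt n adj i u w * g w).
Proof.
  revert u; induction i; intros u Hu.
  - simpl. rewrite (rsum_ext n _ (fun w => if Nat.eqb u w then g u else 0)).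
    + rewrite rsum_eqb; auto; lra.
    + intros w _; destruct (Nat.eqb_spec u w); subst; lra.
  - transitivity (rsum n (fun w => rsum n (fun v => P1 n adj u v * pt n adj i v w * g w))).
    + rewrite rsum_swap. simpl. apply rsum_ext; intros v Hv.
      rewrite (rsum_ext n _ (fun w => P1 n adj u v * (pt n adj i v w * g w))) by (intros; lra).
      rewrite rsum_scal, <- IHi, <- sumseq_scal by auto. apply sumseq_ext; intros; simpl; lra.
    + apply rsum_ext; intros w Hw. rewrite pt_S_l, Rmult_comm, <- rsum_scal by auto.
      apply rsum_ext; intros; lra.
Qed.

Lemma sumseq_wt_markov L i u (F : nat -> list nat -> R) : (u < n)%nat -> (i <= L)%nat ->
  sumseq n L (fun xs => wt n adj u xs * F (nth i (u :: xs) 0%nat) (skipn (S i) (u :: xs))) =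
  rsum n (fun w => pt n adj i u w * sumseq n (L - i) (fun t => wt n adj w t * F w t)).
Proof.
  intros Hu Hi. replace L with (i + (L - i))%nat at 1 by lia. rewrite sumseq_app.
  rewrite <- sumseq_wt_walk_end by auto.
  apply sumseq_ext; intros s Hs. rewrite <- sumseq_scal. apply sumseq_ext; intros t _.
  subst i. rewrite nth_walk_end, skipn_walk_end, wt_app. lra.
Qed.

Lemma sumseq_wt_firstn r k w (F : list nat -> R) : (w < n)%nat ->
  sumseq n (r + k) (fun t => wt n adj w t * F (firstn r t)) = sumseq n r (fun t => wt n adj w t * F t).
Proof.
  revert w F; induction r; intros w F Hw; simpl.
  - rewrite (sumseq_ext n k _ (fun t => F nil * wt n adj w t)), sumseq_scal, wt_total; auto; intros; lra.
  - apply rsum_ext; intros v Hv.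
    rewrite (sumseq_ext n (r + k) _ (fun t => P1 n adj w v * (wt n adj v t * F (v :: firstn r t))))
      by (intros; lra).
    rewrite sumseq_scal, (IHr v (fun t => F (v :: t))), <- sumseq_scal by auto.
    apply sumseq_ext; intros; lra.
Qed.

Hypothesis adj_sym : forall u v, adj u v = adj v u.
Hypothesis n_pos : (0 < n)%nat.

Lemma twoE_pos : 0 < twoE n adj.
Proof.
  apply Rlt_le_trans with (INR (deg n adj 0)); [apply lt_0_INR; auto|].
  apply (rsum_term_le n (fun v => INR (deg n adj v))); auto using pos_INR.
Qed.

Lemma pi_sum : rsum n (pi_ n adj) = 1.
Proof.
  unfold pi_. rewrite (rsum_ext n _ (fun v => / twoE n adj * INR (deg n adj v))).
  - rewrite rsum_scal. pose proof twoE_pos. unfold twoE in *. field; lra.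
  - intros; unfold Rdiv; lra.
Qed.

Lemma P1_reversible u v : (u < n)%nat -> (v < n)%nat ->
  pi_ n adj u * P1 n adj u v = pi_ n adj v * P1 n adj v u.
Proof.
  intros Hu Hv. pose proof twoE_pos.
  assert (0 < INR (deg n adj u)) by (apply lt_0_INR; auto).
  assert (0 < INR (deg n adj v)) by (apply lt_0_INR; auto).
  unfold P1, pi_. rewrite (adj_sym v u).
  destruct (Nat.eqb_spec u v) as [<-|]; [rewrite Nat.eqb_refl; reflexivity|].
  destruct (Nat.eqb_spec v u); [congruence|].
  destruct (adj u v); field; lra.
Qed.

Lemma pt_reversible t u v : (u < n)%nat -> (v < n)%nat ->
  pi_ n adj u * pt n adj t u v = pi_ n adj v * pt n adj t v u.
Proof.
  revert u v; induction t; intros u v Hu Hv.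
  - simpl. destruct (Nat.eqb_spec u v), (Nat.eqb_spec v u); subst; try lra; congruence.
  - rewrite (pt_S_l t v u) by auto. simpl. rewrite <- !rsum_scal. apply rsum_ext; intros w Hw.
    rewrite <- Rmult_assoc, IHt by auto.
    replace (pi_ n adj w * pt n adj t w u * P1 n adj w v)
      with (pt n adj t w u * (pi_ n adj w * P1 n adj w v)) by ring.
    rewrite P1_reversible by auto. ring.
Qed.

Lemma rsum_pi_pt_pt i j w : (w < n)%nat ->
  rsum n (fun u => pi_ n adj u * pt n adj i u w * pt n adj j u w) = pi_ n adj w * pt n adj (i + j) w w.
Proof.
  intros Hw. rewrite pt_add, <- rsum_scal by auto. apply rsum_ext; intros u Hu.
  rewrite pt_reversible by auto. lra.
Qed.

End LazyWalk.

Definition indn (a b : nat) : R := if Nat.eqb a b then 1 else 0.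

Definition meet_at (i j : nat) (G : nat -> list nat -> list nat -> R) (X Y : list nat) : R :=
  indn (nth i X 0%nat) (nth j Y 0%nat) * G (nth i X 0%nat) (skipn (S i) X) (skipn (S j) Y).

Section TwoWalks.
Variable n : nat.
Variable adj : nat -> nat -> bool.

Definition walks_expect (a b w : nat) (H : list nat -> list nat -> R) : R :=
  sumseq n a (fun s => sumseq n b (fun t => wt n adj w s * wt n adj w t * H s t)).

(* u ~ pi and two independent L-step walks from u; the paths passed to [F]
   include the starting vertex. *)
Definition pair_expect (L : nat) (F : list nat -> list nat -> R) : R :=
  rsum n (fun u => pi_ n adj u * walks_expect L L u (fun xs ys => F (u :: xs) (u :: ys))).

Lemma walks_expect_le a b w H K :
  (forall s t, length s = a -> length t = b -> H s t <= K s t) ->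
  walks_expect a b w H <= walks_expect a b w K.
Proof.
  intros HK. apply sumseq_le; intros s Hs; apply sumseq_le; intros t Ht.
  apply Rmult_le_compat_l; auto. apply Rmult_le_pos; apply wt_nonneg.
Qed.

Lemma walks_expect_nonneg a b w H : (forall s t, 0 <= H s t) -> 0 <= walks_expect a b w H.
Proof.
  intros HH. apply sumseq_nonneg; intros s _; apply sumseq_nonneg; intros t _.
  apply Rmult_le_pos; auto. apply Rmult_le_pos; apply wt_nonneg.
Qed.

Lemma pair_expect_le L F G :
  (forall u xs ys, length xs = L -> length ys = L -> F (u :: xs) (u :: ys) <= G (u :: xs) (u :: ys)) ->
  pair_expect L F <= pair_expect L G.
Proof.
  intros HFG. apply rsum_le; intros u _.
  apply Rmult_le_compat_l; [apply pi_nonneg | apply walks_expect_le; auto].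
Qed.

Lemma pair_expect_add L F G :
  pair_expect L (fun X Y => F X Y + G X Y) = pair_expect L F + pair_expect L G.
Proof.
  unfold pair_expect, walks_expect. rewrite <- rsum_add. apply rsum_ext; intros.
  rewrite <- Rmult_plus_distr_l, <- sumseq_add. f_equal. apply sumseq_ext; intros.
  rewrite <- sumseq_add. apply sumseq_ext; intros; lra.
Qed.

Lemma pair_expect_rsum L m (F : nat -> list nat -> list nat -> R) :
  pair_expect L (fun X Y => rsum m (fun k => F k X Y)) = rsum m (fun k => pair_expect L (F k)).
Proof.
  unfold pair_expect, walks_expect. rewrite rsum_swap. apply rsum_ext; intros u _.
  rewrite rsum_scal, <- sumseq_rsum. f_equal. apply sumseq_ext; intros xs _.
  rewrite <- sumseq_rsum. apply sumseq_ext; intros. symmetry; apply rsum_scal.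
Qed.

Lemma pair_expect_0 L : pair_expect L (fun _ _ => 0) = 0.
Proof.
  unfold pair_expect, walks_expect. transitivity (rsum n (fun _ => 0)); [|apply rsum_0].
  apply rsum_ext; intros.
  rewrite (sumseq_ext n L _ (fun _ => 0)), sumseq_0; [lra|].
  intros. rewrite (sumseq_ext n L _ (fun _ => 0)), sumseq_0; auto. intros; lra.
Qed.

Hypothesis deg_pos : forall v, (v < n)%nat -> (0 < deg n adj v)%nat.

Lemma walks_expect_1 a b w : (w < n)%nat -> walks_expect a b w (fun _ _ => 1) = 1.
Proof.
  intros Hw. unfold walks_expect.
  rewrite (sumseq_ext n a _ (fun s => wt n adj w s * sumseq n b (wt n adj w))).
  - rewrite wt_total by auto. rewrite (sumseq_ext n a _ (wt n adj w)) by (intros; lra).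
    apply wt_total; auto.
  - intros. rewrite <- sumseq_scal. apply sumseq_ext; intros; lra.
Qed.

Lemma walks_expect_firstn a b r w H : (r <= a)%nat -> (r <= b)%nat -> (w < n)%nat ->
  walks_expect a b w (fun s t => H (firstn r s) (firstn r t)) = walks_expect r r w H.
Proof.
  intros Ha Hb Hw. unfold walks_expect.
  set (Psi := fun s => sumseq n r (fun t => wt n adj w t * H s t)).
  transitivity (sumseq n a (fun s => wt n adj w s * Psi (firstn r s))).
  - apply sumseq_ext; intros s _. unfold Psi.
    replace b with (r + (b - r))%nat by lia.
    rewrite <- (sumseq_wt_firstn n adj deg_pos r (b - r) w (H (firstn r s))), <- sumseq_scal by auto.
    apply sumseq_ext; intros; lra.
  - replace a with (r + (a - r))%nat by lia.
    rewrite (sumseq_wt_firstn n adj deg_pos r (a - r) w Psi) by auto.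
    apply sumseq_ext; intros s _. unfold Psi. rewrite <- sumseq_scal. apply sumseq_ext; intros; lra.
Qed.

Lemma walks_expect_meet_at L i j u G : (u < n)%nat -> (i <= L)%nat -> (j <= L)%nat ->
  walks_expect L L u (fun xs ys => meet_at i j G (u :: xs) (u :: ys))
  = rsum n (fun w => pt n adj i u w * pt n adj j u w * walks_expect (L - i) (L - j) w (G w)).
Proof.
  intros Hu Hi Hj. unfold walks_expect, meet_at.
  set (Phi := fun a s => sumseq n L (fun ys => wt n adj u ys *
      (indn a (nth j (u :: ys) 0%nat) * G a s (skipn (S j) (u :: ys))))).
  transitivity (sumseq n L (fun xs =>
    wt n adj u xs * Phi (nth i (u :: xs) 0%nat) (skipn (S i) (u :: xs)))).
  { apply sumseq_ext; intros xs _. unfold Phi. rewrite <- sumseq_scal. apply sumseq_ext; intros; lra. }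
  rewrite sumseq_wt_markov by auto. apply rsum_ext; intros w Hw.
  rewrite Rmult_assoc. f_equal. rewrite <- sumseq_scal. apply sumseq_ext; intros s _.
  unfold Phi. rewrite (sumseq_wt_markov n adj L j u (fun b t => indn w b * G w s t)) by auto.
  rewrite (rsum_ext n _ (fun w' => if Nat.eqb w w' then
     pt n adj j u w * sumseq n (L - j) (fun t => wt n adj w t * G w s t) else 0)).
  - rewrite rsum_eqb, <- !sumseq_scal by auto. apply sumseq_ext; intros; lra.
  - intros w' _. unfold indn. destruct (Nat.eqb_spec w w') as [<-|].
    + f_equal. apply sumseq_ext; intros; lra.
    + rewrite (sumseq_ext n _ _ (fun _ => 0)), sumseq_0; [lra | intros; lra].
Qed.

Hypothesis adj_sym : forall u v, adj u v = adj v u.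
Hypothesis n_pos : (0 < n)%nat.

Lemma pair_expect_1 L : pair_expect L (fun _ _ => 1) = 1.
Proof.
  unfold pair_expect. transitivity (rsum n (pi_ n adj)); [|apply pi_sum; auto].
  apply rsum_ext; intros u Hu. cbv beta. rewrite walks_expect_1; auto; lra.
Qed.

(* The meeting formula: by reversibility, starting both walks at a pi-distributed
   vertex and meeting at times i and j is the same as a return at time i + j. *)
Lemma pair_expect_meet_at L i j G : (i <= L)%nat -> (j <= L)%nat ->
  pair_expect L (meet_at i j G)
  = rsum n (fun w => pi_ n adj w * pt n adj (i + j) w w * walks_expect (L - i) (L - j) w (G w)).
Proof.
  intros Hi Hj. unfold pair_expect.
  rewrite (rsum_ext n _ (fun u => rsum n (fun w =>
     pi_ n adj u * pt n adj i u w * pt n adj j u w * walks_expect (L - i) (L - j) w (G w)))).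
  - rewrite rsum_swap. apply rsum_ext; intros w Hw.
    rewrite (rsum_ext n _ (fun u => walks_expect (L - i) (L - j) w (G w) *
       (pi_ n adj u * pt n adj i u w * pt n adj j u w))) by (intros; lra).
    rewrite rsum_scal, rsum_pi_pt_pt by auto. lra.
  - intros u Hu. rewrite walks_expect_meet_at, <- rsum_scal by auto. apply rsum_ext; intros; lra.
Qed.

End TwoWalks.

Lemma In_firstn (x : nat) k l : In x (firstn k l) -> In x l.
Proof. intros H. rewrite <- (firstn_skipn k l). apply in_or_app; auto. Qed.

Lemma In_skipn (x : nat) k l : In x (skipn k l) -> In x l.
Proof. intros H. rewrite <- (firstn_skipn k l). apply in_or_app; auto. Qed.

Lemma disjointb_true a b : (forall x, In x a -> ~ In x b) -> disjointb a b = true.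
Proof.
  intros H. apply forallb_forall. intros x Hx. apply Bool.negb_true_iff.
  destruct (existsb (Nat.eqb x) b) eqn:E; auto.
  apply existsb_exists in E. destruct E as [y [Hy Hxy]]. apply Nat.eqb_eq in Hxy; subst.
  exfalso; eapply H; eauto.
Qed.

Lemma exists_last_hit (l X : list nat) : (forall x, In x l -> ~ In x X) \/
  exists k, (k < length l)%nat /\ In (nth k l 0%nat) X /\ forall x, In x (skipn (S k) l) -> ~ In x X.
Proof.
  induction l as [|a l [H|[k [Hk [Hin Hs]]]]].
  - left; simpl; tauto.
  - destruct (in_dec Nat.eq_dec a X).
    + right. exists 0%nat. simpl. repeat split; auto; lia.
    + left. simpl. intros x [<-|Hx]; auto.
  - right. exists (S k). simpl. repeat split; auto; lia.
Qed.

Definition nonint_ind (w : nat) (s t : list nat) : R := if disjointb (w :: s) t then 1 else 0.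

Definition escape_prob (n : nat) (adj : nat -> nat -> bool) (r w : nat) : R :=
  walks_expect n adj r r w (nonint_ind w).

Lemma nonint_prob_escape n adj r : nonint_prob n adj r = rsum n (fun u => pi_ n adj u * escape_prob n adj r u).
Proof. reflexivity. Qed.

Lemma escape_prob_nonneg n adj r w : 0 <= escape_prob n adj r w.
Proof. apply walks_expect_nonneg. intros; unfold nonint_ind; destruct (disjointb _ _); lra. Qed.

Definition short_meetings (T r : nat) (X Y : list nat) : R :=
  rsum (S T) (fun t => rsum (S t) (fun i =>
    meet_at i (t - i) (fun w s s' => nonint_ind w (firstn r s) (firstn r s')) X Y)).

Definition long_meetings (T L : nat) (X Y : list nat) : R :=
  rsum (S L) (fun i => rsum (S L) (fun j =>
    if Nat.ltb T (i + j) then meet_at i j (fun _ _ _ => 1) X Y else 0)).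

Lemma meet_at_nonneg i j G X Y : (forall w s t, 0 <= G w s t) -> 0 <= meet_at i j G X Y.
Proof. intros; unfold meet_at, indn; destruct (Nat.eqb _ _); [rewrite Rmult_1_l; auto | lra]. Qed.

Lemma nonint_ind_nonneg w s t : 0 <= nonint_ind w s t.
Proof. unfold nonint_ind; destruct (disjointb _ _); lra. Qed.

Lemma long_meetings_term_nonneg T i j X Y :
  0 <= if Nat.ltb T (i + j) then meet_at i j (fun _ _ _ => 1) X Y else 0.
Proof. destruct (Nat.ltb T _); [apply meet_at_nonneg; intros; lra | lra]. Qed.

Lemma last_meeting_cover T r L u xs ys : length xs = L -> length ys = L ->
  1 <= short_meetings T r (u :: xs) (u :: ys) + long_meetings T L (u :: xs) (u :: ys).
Proof.
  intros Hx Hy. set (X := u :: xs). set (Y := u :: ys).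
  destruct (exists_last_hit Y X) as [H|[J [HJ [Hin Hafter]]]].
  { exfalso. apply (H u); simpl; auto. }
  destruct (In_nth X (nth J Y 0%nat) 0%nat Hin) as [I [HI HIJ]].
  assert (Hmeet : forall G, G (nth I X 0%nat) (skipn (S I) X) (skipn (S J) Y) = 1 ->
                            meet_at I J G X Y = 1).
  { intros G HG. unfold meet_at, indn. rewrite HG, HIJ, Nat.eqb_refl. lra. }
  assert (Hshort : 0 <= short_meetings T r X Y).
  { apply rsum_nonneg; intros; apply rsum_nonneg; intros.
    apply meet_at_nonneg; intros; apply nonint_ind_nonneg. }
  assert (Hlong : 0 <= long_meetings T L X Y).
  { apply rsum_nonneg; intros; apply rsum_nonneg; intros; apply long_meetings_term_nonneg. }
  assert (LX : length X = S L) by (simpl; auto). assert (LY : length Y = S L) by (simpl; auto).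
  destruct (Nat.leb_spec (I + J) T).
  - enough (1 <= short_meetings T r X Y) by lra.
    eapply Rle_trans; [|apply (rsum_term_le _ _ (I + J))]; cbv beta.
    2:{ intros; apply rsum_nonneg; intros; apply meet_at_nonneg; intros; apply nonint_ind_nonneg. }
    2:{ lia. }
    eapply Rle_trans; [|apply (rsum_term_le _ _ I)]; cbv beta.
    2:{ intros; apply meet_at_nonneg; intros; apply nonint_ind_nonneg. }
    2:{ lia. }
    replace (I + J - I)%nat with J by lia. rewrite Hmeet; [lra|].
    unfold nonint_ind. rewrite disjointb_true; auto.
    intros x Hx1 Hx2. apply (Hafter x); [now apply In_firstn in Hx2|].
    destruct Hx1 as [<-|Hx1]; [apply nth_In; lia|].
    now apply In_firstn, In_skipn in Hx1.
  - enough (1 <= long_meetings T L X Y) by lra.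
    eapply Rle_trans; [|apply (rsum_term_le _ _ I)]; cbv beta.
    2:{ intros; apply rsum_nonneg; intros; apply long_meetings_term_nonneg. }
    2:{ lia. }
    eapply Rle_trans; [|apply (rsum_term_le _ _ J)]; cbv beta.
    2:{ intros; apply long_meetings_term_nonneg. }
    2:{ lia. }
    replace (Nat.ltb T (I + J)) with true by (symmetry; apply Nat.ltb_lt; lia).
    rewrite Hmeet; lra.
Qed.

Section BubbleBound.
Variable n : nat.
Variable adj : nat -> nat -> bool.
Variables (eps : R) (T r : nat).
Hypothesis adj_sym : forall u v, adj u v = adj v u.
Hypothesis deg_pos : forall v, (v < n)%nat -> (0 < deg n adj v)%nat.
Hypothesis n_pos : (0 < n)%nat.
Hypothesis pt_T_le : forall z w, (z < n)%nat -> (w < n)%nat -> pt n adj T z w <= eps.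

Lemma pt_after_le s w : (w < n)%nat -> pt n adj (s + T) w w <= eps.
Proof.
  intros Hw. rewrite pt_add by auto.
  apply Rle_trans with (rsum n (fun z => eps * pt n adj s w z)).
  - apply rsum_le; intros z Hz. rewrite Rmult_comm.
    apply Rmult_le_compat_r; auto using pt_nonneg.
  - rewrite rsum_scal, pt_row_sum by auto. lra.
Qed.

Lemma short_meeting_le t i : (t <= T)%nat -> (i <= t)%nat ->
  pair_expect n adj (r + T)
    (meet_at i (t - i) (fun w s s' => nonint_ind w (firstn r s) (firstn r s')))
  <= rmax n (fun v => pt n adj t v v) * nonint_prob n adj r.
Proof.
  intros Ht Hi. rewrite pair_expect_meet_at by (auto; lia).
  rewrite nonint_prob_escape, <- rsum_scal. apply rsum_le; intros w Hw.
  replace (i + (t - i))%nat with t by lia.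
  rewrite (walks_expect_firstn n adj deg_pos _ _ r w (nonint_ind w)) by (auto; lia). fold (escape_prob n adj r w).
  pose proof (le_rmax n (fun v => pt n adj t v v) w Hw).
  pose proof (pi_nonneg n adj w). pose proof (escape_prob_nonneg n adj r w).
  replace (rmax n (fun v => pt n adj t v v) * (pi_ n adj w * escape_prob n adj r w))
    with (pi_ n adj w * rmax n (fun v => pt n adj t v v) * escape_prob n adj r w) by ring.
  apply Rmult_le_compat_r; auto. apply Rmult_le_compat_l; auto.
Qed.

Lemma long_meeting_le i j : (i <= r + T)%nat -> (j <= r + T)%nat ->
  pair_expect n adj (r + T) (fun X Y => if Nat.ltb T (i + j) then meet_at i j (fun _ _ _ => 1) X Y else 0)
  <= eps.
Proof.
  intros Hi Hj. destruct (Nat.ltb_spec T (i + j)).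
  - rewrite pair_expect_meet_at by auto.
    apply Rle_trans with (rsum n (fun w => eps * pi_ n adj w)).
    + apply rsum_le; intros w Hw. rewrite walks_expect_1 by auto.
      replace (i + j)%nat with ((i + j - T) + T)%nat by lia.
      pose proof (pt_after_le (i + j - T) w Hw). pose proof (pi_nonneg n adj w). nra.
    + rewrite rsum_scal, pi_sum by auto. lra.
  - rewrite pair_expect_0. eapply Rle_trans; [apply (pt_nonneg n adj T 0 0) | apply pt_T_le; auto].
Qed.

Lemma one_le_bubble_nonint :
  1 <= bubble n adj T * nonint_prob n adj r + INR (S (r + T)) * INR (S (r + T)) * eps.
Proof.
  rewrite <- (pair_expect_1 n adj deg_pos n_pos (r + T)).
  eapply Rle_trans.
  { apply (pair_expect_le n adj (r + T) _
      (fun X Y => short_meetings T r X Y + long_meetings T (r + T) X Y)).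
    intros u xs ys; apply last_meeting_cover. }
  rewrite pair_expect_add. apply Rplus_le_compat.
  - unfold short_meetings, bubble. rewrite pair_expect_rsum.
    rewrite Rmult_comm, <- rsum_scal. apply rsum_le; intros t Ht.
    rewrite pair_expect_rsum.
    apply Rle_trans with (rsum (S t) (fun _ => rmax n (fun v => pt n adj t v v) * nonint_prob n adj r)).
    + apply rsum_le; intros i Hi; apply short_meeting_le; lia.
    + rewrite rsum_const; right; ring.
  - unfold long_meetings. rewrite pair_expect_rsum, Rmult_assoc, <- rsum_const.
    apply rsum_le; intros i Hi. rewrite pair_expect_rsum, <- rsum_const.
    apply rsum_le; intros j Hj. apply long_meeting_le; lia.
Qed.

End BubbleBound.

Lemma connected_deg_pos n adj : (2 <= n)%nat -> connected n adj ->
  forall v, (v < n)%nat -> (0 < deg n adj v)%nat.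
Proof.
  intros Hn2 [_ Hconn] v Hv.
  set (v' := if Nat.eqb v 0 then 1%nat else 0%nat).
  assert (Hv' : (v' < n)%nat) by (unfold v'; destruct (Nat.eqb v 0); lia).
  assert (Hne : v <> v') by (unfold v'; destruct (Nat.eqb_spec v 0); lia).
  destruct (clos_rt_rt1n _ _ _ _ (Hconn v v' Hv Hv')) as [|y z [_ [Hy Hadj]] _]; [contradiction|].
  assert (Hin : In y (filter (adj v) (seq 0 n))) by (apply filter_In; split; [apply In_seq0|]; auto).
  unfold deg. destruct (filter (fun w => adj v w) (seq 0 n)); simpl in *; [contradiction | lia].
Qed.

Lemma pi_le_balanced n adj D : (0 < n)%nat -> (forall v, (v < n)%nat -> (0 < deg n adj v)%nat) ->
  (forall u v, (u < n)%nat -> (v < n)%nat -> INR (deg n adj u) <= D * INR (deg n adj v)) ->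
  forall w, (w < n)%nat -> pi_ n adj w <= D / INR n.
Proof.
  intros Hn Hdeg Hbal w Hw.
  assert (HE : INR n * INR (deg n adj w) <= D * twoE n adj).
  { unfold twoE. rewrite <- rsum_scal, <- rsum_const. apply rsum_le; intros v Hv; auto. }
  pose proof (twoE_pos n adj Hdeg Hn). assert (0 < INR n) by (apply lt_0_INR; auto).
  unfold pi_. apply Rmult_le_reg_r with (INR n * twoE n adj); [nra|].
  replace (INR (deg n adj w) / twoE n adj * (INR n * twoE n adj)) with (INR n * INR (deg n adj w))
    by (field; lra).
  replace (D / INR n * (INR n * twoE n adj)) with (D * twoE n adj) by (field; lra). exact HE.
Qed.

Lemma mixed_pt_le n adj T : (0 < n)%nat -> (forall v, (v < n)%nat -> (0 < deg n adj v)%nat) ->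
  mixed n adj T -> forall z w, (z < n)%nat -> (w < n)%nat -> pt n adj T z w <= 3/2 * pi_ n adj w.
Proof.
  intros Hn Hdeg Hmix z w Hz Hw.
  assert (Hpi : 0 < pi_ n adj w).
  { apply Rdiv_lt_0_compat; [apply lt_0_INR; auto | apply twoE_pos; auto]. }
  pose proof (Rle_abs (pt n adj T z w / pi_ n adj w - 1)) as Habs. pose proof (Hmix z w Hz Hw).
  assert (Hq : pt n adj T z w = pt n adj T z w / pi_ n adj w * pi_ n adj w) by (field; lra).
  rewrite Hq. apply Rmult_le_compat_r; lra.
Qed.

Lemma run_time_le n alpha : INR (run_time n alpha) <= Rpower (INR n) (/ 2 - alpha / 3).
Proof.
  unfold run_time. set (x := Rpower (INR n) (/ 2 - alpha / 3)).
  destruct (Z_le_gt_dec 0 (Int_part x)).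
  - rewrite INR_IZR_INZ, Z2Nat.id by auto. apply base_Int_part.
  - replace (Z.to_nat (Int_part x)) with 0%nat by lia. simpl. left; apply exp_pos.
Qed.

Lemma le_run_time n alpha T : 1 <= INR n -> 0 < alpha ->
  INR T <= Rpower (INR n) (/ 2 - alpha) -> (T <= run_time n alpha)%nat.
Proof.
  intros Hn Ha HT. set (x := Rpower (INR n) (/ 2 - alpha / 3)).
  assert (HTx : INR T <= x) by (eapply Rle_trans; [apply HT | apply Rle_Rpower; auto; lra]).
  destruct (archimed x) as [Hup _].
  assert (Z.of_nat T < up x)%Z by (apply lt_IZR; rewrite <- INR_IZR_INZ; lra).
  unfold run_time, Int_part. fold x. lia.
Qed.

(* With r <= n^(1/2 - alpha/3) and g = min(alpha/3, 1/4), both n^(1/2 - g) >= max(r, 1)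
   and n^(2g) -> infinity; the cap 1/4 keeps the first exponent positive. *)
Lemma eventually_small D alpha : 0 < D -> 0 < alpha -> exists N0 : nat, forall n : nat, (N0 <= n)%nat ->
  forall x, 0 <= x -> x <= Rpower (INR n) (/ 2 - alpha / 3) ->
  (2 * x + 1) * (2 * x + 1) * (3/2 * (D / INR n)) <= 1/2.
Proof.
  intros HD Ha. set (g := Rmin (alpha / 3) (1 / 4)).
  assert (Hg : 0 < g /\ g <= alpha / 3 /\ g <= 1 / 4)
    by (repeat split; [apply Rmin_glb_lt; lra | apply Rmin_l | apply Rmin_r]).
  set (K := Rpower (27 * D) (/ (2 * g))).
  exists (Z.to_nat (up K)). intros n Hn x Hx0 Hx.
  assert (HnK : K < INR n).
  { destruct (archimed K) as [HK _].
    assert (0 < K) by apply exp_pos.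
    assert (HupK : (0 <= up K)%Z) by (apply le_IZR; lra).
    apply Rlt_le_trans with (IZR (up K)); [lra|].
    rewrite <- (Z2Nat.id (up K)), <- INR_IZR_INZ by auto. apply le_INR; lia. }
  assert (Hn1 : 1 <= INR n).
  { assert (0 < K) by apply exp_pos.
    destruct n; [simpl in HnK; lra | apply (le_INR 1); lia]. }
  set (y := Rpower (INR n) (/ 2 - g)). set (P := Rpower (INR n) (2 * g)).
  assert (Hxy : x <= y) by (eapply Rle_trans; [apply Hx | apply Rle_Rpower; auto; lra]).
  assert (Hy1 : 1 <= y) by (unfold y; rewrite <- (Rpower_O (INR n)) by lra; apply Rle_Rpower; lra).
  assert (HP : 27 * D <= P).
  { replace (27 * D) with (Rpower K (2 * g)).
    - apply Rle_Rpower_l; [lra|]. split; [apply exp_pos | lra].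
    - unfold K. rewrite Rpower_mult. replace (/ (2 * g) * (2 * g)) with 1 by (field; lra).
      apply Rpower_1; lra. }
  assert (Hnyy : INR n = y * y * P).
  { unfold y, P. rewrite <- !Rpower_plus. replace (/ 2 - g + (/ 2 - g) + 2 * g) with 1 by field.
    rewrite Rpower_1; lra. }
  assert (0 < P) by apply exp_pos.
  assert (H9 : (2 * x + 1) * (2 * x + 1) <= 9 * (y * y)) by nra.
  rewrite Hnyy. apply Rle_trans with (9 * (y * y) * (3/2 * (D / (y * y * P)))).
  - apply Rmult_le_compat_r; auto. apply Rmult_le_pos; [lra|].
    apply Rlt_le, Rdiv_lt_0_compat; nra.
  - replace (9 * (y * y) * (3/2 * (D / (y * y * P)))) with (27/2 * D / P) by (field; nra).
    apply Rmult_le_reg_r with P; auto. unfold Rdiv. rewrite Rmult_assoc, Rinv_l; lra.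
Qed.

Theorem mainTheorem6 :
  forall D alpha theta : R, 0 < D -> 0 < alpha -> 0 < theta ->
  exists c : R, 0 < c /\
  exists N0 : nat, forall (n : nat) (adj : nat -> nat -> bool),
    (N0 <= n)%nat ->
    simple_graph n adj ->
    connected n adj ->
    (* (bal) Delta(G) / delta(G) <= D *)
    (forall u v, (u < n)%nat -> (v < n)%nat ->
        INR (deg n adj u) <= D * INR (deg n adj v)) ->
    (* (mix) and (esc), with T the uniform mixing time *)
    (exists T : nat, is_tmix n adj T /\
        INR T <= Rpower (INR n) (/ 2 - alpha) /\
        bubble n adj T <= theta) ->
    nonint_prob n adj (run_time n alpha) >= c.
Proof.
  intros D alpha theta HD Ha Hth. exists (/ (2 * theta)). split; [apply Rinv_0_lt_compat; lra|].
  destruct (eventually_small D alpha HD Ha) as [N0 Hsmall]. exists (Nat.max 2 N0).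
  intros n adj Hn [Hsym _] Hconn Hbal [T [[HTmix _] [HT Hbub]]].
  set (r := run_time n alpha).
  assert (Hn0 : (0 < n)%nat) by lia.
  pose proof (connected_deg_pos n adj ltac:(lia) Hconn) as Hdeg.
  assert (HTr : (T <= r)%nat) by (apply le_run_time; auto; apply (le_INR 1); lia).
  assert (Hpt : forall z w, (z < n)%nat -> (w < n)%nat -> pt n adj T z w <= 3/2 * (D / INR n)).
  { intros z w Hz Hw. eapply Rle_trans; [apply mixed_pt_le; eauto|].
    pose proof (pi_le_balanced n adj D Hn0 Hdeg Hbal w Hw). lra. }
  pose proof (one_le_bubble_nonint n adj _ T r Hsym Hdeg Hn0 Hpt) as Hkey.
  assert (Htail : INR (S (r + T)) * INR (S (r + T)) * (3/2 * (D / INR n)) <= 1/2).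
  { pose proof (Hsmall n ltac:(lia) (INR r) (pos_INR r) (run_time_le n alpha)).
    assert (INR (S (r + T)) <= 2 * INR r + 1) by (rewrite S_INR, plus_INR; apply le_INR in HTr; lra).
    assert (0 <= 3/2 * (D / INR n)) by (eapply Rle_trans; [apply pt_nonneg | apply (Hpt 0 0)%nat]; lia).
    pose proof (pos_INR (S (r + T))).
    eapply Rle_trans; [|eassumption]. apply Rmult_le_compat_r; [lra|]. apply Rmult_le_compat; lra. }
  assert (Hp : 0 <= nonint_prob n adj r).
  { apply rsum_nonneg; intros. apply Rmult_le_pos; [apply pi_nonneg | apply escape_prob_nonneg]. }
  apply Rle_ge, Rmult_le_reg_l with (2 * theta); [lra|].
  rewrite Rinv_r by lra. nra.
Qed.
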